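(* For every graph $G$ there exists a graph $H$ such that $|H|=|G|+1$, $G$ is an induced subgraph of $H$, and $\alpha_{\mathrm{od}}(H)=\alpha(H)=\alpha(G)+1$.
   Context: An odd independent set in $G=(V,E)$ is an independent set $S$ such that every $v\in V\setminus S$ has either no neighbor or an odd number of neighbors in $S$; $\alpha_{\mathrm{od}}(G)$ is its maximum size; $\alpha$ is the independence number; $|G|$ is the number of vertices. *)

From mathcomp Require Import all_boot.
Set Implicit Arguments. Unset Strict Implicit. Unset Printing Implicit Defensive.

Definition simple_graph (T : finType) (e : rel T) : Prop :=
  symmetric e /\ irreflexive e.

Definition nbhd_in (T : finType) (e : rel T) (S : {set T}) (v : T) : {set T} :=
  [set u in S | e v u].

Definition independent (T : finType) (e : rel T) (S : {set T}) : bool :=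
  [forall x in S, forall y in S, ~~ e x y].

Definition odd_independent (T : finType) (e : rel T) (S : {set T}) : bool :=
  independent e S &&
  [forall v in ~: S, (#|nbhd_in e S v| == 0) || odd #|nbhd_in e S v|].

Definition alpha (T : finType) (e : rel T) : nat :=
  \max_(S : {set T} | independent e S) #|S|.

Definition alpha_od (T : finType) (e : rel T) : nat :=
  \max_(S : {set T} | odd_independent e S) #|S|.

Definition induced_embedding (T U : finType) (eG : rel T) (eH : rel U)
  (f : T -> U) : Prop :=
  injective f /\ forall x y, eH (f x) (f y) = eG x y.

(* Adjoin to G a new vertex [None] adjacent to a set E of old vertices.
   Then alpha(H) <= alpha(G) + 1, since deleting the new vertex from an
   independent set of H leaves an independent set of G.  Take S maximum
   independent in G and let E be the vertices outside S having an even number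
   of neighbours in S.  The set S + None is independent in H (None has no
   neighbour in S), of size alpha(G) + 1, and odd: a vertex outside S sees in
   it its neighbours in S, plus None exactly when that number is even. *)

From mathcomp Require Import all_boot.
Set Implicit Arguments. Unset Strict Implicit. Unset Printing Implicit Defensive.

Section IndependenceNumbers.

Variables (T : finType) (e : rel T).

Lemma independent0 : independent e set0.
Proof. by apply/forallP => x; rewrite inE. Qed.

Lemma independent_le_alpha (S : {set T}) : independent e S -> #|S| <= alpha e.
Proof. exact: (@leq_bigmax_cond _ _ (fun S : {set T} => #|S|) S). Qed.

Lemma odd_independent_le_alpha_od (S : {set T}) :
  odd_independent e S -> #|S| <= alpha_od e.
Proof. exact: (@leq_bigmax_cond _ _ (fun S : {set T} => #|S|) S). Qed.

Lemma alpha_attained : exists2 S : {set T}, independent e S & alpha e = #|S|.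
Proof.
have nonempty : 0 < #|[pred S : {set T} | independent e S]|.
  by apply/card_gt0P; exists set0; rewrite inE independent0.
have [S indS alphaE] := eq_bigmax_cond (fun S : {set T} => #|S|) nonempty.
by rewrite inE in indS; exists S.
Qed.

Lemma alpha_od_le_alpha : alpha_od e <= alpha e.
Proof. by apply/bigmax_leqP => S /andP[indS _]; apply: independent_le_alpha. Qed.

End IndependenceNumbers.

Lemma independent_preimage (T U : finType) (eG : rel T) (eH : rel U)
    (f : T -> U) (X : {set U}) :
  (forall x y, eH (f x) (f y) = eG x y) ->
  independent eH X -> independent eG (f @^-1: X).
Proof.
move=> fE /forall_inP indX; apply/forall_inP => x; rewrite inE => Xfx.
apply/forall_inP => y; rewrite inE -fE => Xfy.
by move/forall_inP: (indX _ Xfx); apply.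
Qed.

Definition apex_extend (T : finType) (S : {set T}) : {set option T} :=
  None |: [set Some x | x in S].

Lemma card_apex_extend (T : finType) (S : {set T}) :
  #|apex_extend S| = #|S| + 1.
Proof.
have NnotS : None \notin [set Some x | x in S] by apply/imsetP => -[].
by rewrite cardsU1 NnotS card_imset 1?addnC //; apply: Some_inj.
Qed.

Section AdjoinVertex.

Variables (T : finType) (eG : rel T) (E : {set T}).

Definition adjoin_vertex : rel (option T) :=
  fun a b => match a, b with
  | Some x, Some y => eG x y
  | None, Some y => y \in E
  | Some x, None => x \in E
  | None, None => false
  end.

Lemma simple_adjoin_vertex : simple_graph eG -> simple_graph adjoin_vertex.
Proof.
move=> [symG irrG]; split; first by move=> [x|] [y|] //=; rewrite symG.
by move=> [x|] //=; rewrite irrG.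
Qed.

Lemma induced_adjoin_vertex : induced_embedding eG adjoin_vertex Some.
Proof. by split; first exact: Some_inj. Qed.

Lemma alpha_adjoin_vertex_le : alpha adjoin_vertex <= alpha eG + 1.
Proof.
apply/bigmax_leqP => X indX.
have X_sub : X \subset apex_extend (Some @^-1: X).
  apply/subsetP => -[x|] Xx; rewrite /apex_extend in_setU1 ?eqxx //.
  by rewrite (mem_imset _ _ Some_inj) inE Xx orbT.
apply: leq_trans (subset_leq_card X_sub) _.
rewrite card_apex_extend leq_add2r independent_le_alpha //.
exact: (@independent_preimage _ _ _ _ Some _ (fun x y => erefl) indX).
Qed.

Variable S : {set T}.

Lemma independent_adjoin_vertex :
  independent eG S -> [disjoint S & E] ->
  independent adjoin_vertex (apex_extend S).
Proof.
move=> /forall_inP indS disSE.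
have notE x : x \in S -> x \notin E by move=> Sx; rewrite (disjointFr disSE Sx).
apply/forall_inP => a; rewrite /apex_extend in_setU1 => /predU1P[->|/imsetP[x Sx ->]];
  apply/forall_inP => b; rewrite in_setU1 => /predU1P[->|/imsetP[y Sy ->]] //=;
  rewrite ?notE //.
by move/forall_inP: (indS x Sx); apply.
Qed.

Lemma nbhd_in_adjoin_vertex y :
  nbhd_in adjoin_vertex (apex_extend S) (Some y) =
  if y \in E then apex_extend (nbhd_in eG S y) else Some @: nbhd_in eG S y.
Proof.
case: ifP => yE; apply/setP => -[x|];
  rewrite !inE /= ?(mem_imset _ _ Some_inj) ?inE ?yE //.
by apply/esym/negbTE/imsetP => -[].
Qed.

Lemma card_nbhd_in_adjoin_vertex y :
  #|nbhd_in adjoin_vertex (apex_extend S) (Some y)| =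
  #|nbhd_in eG S y| + (y \in E).
Proof.
rewrite nbhd_in_adjoin_vertex; case: (y \in E); first exact: card_apex_extend.
by rewrite card_imset ?addn0 //; apply: Some_inj.
Qed.

End AdjoinVertex.

Definition even_nbhd_outside (T : finType) (e : rel T) (S : {set T}) : {set T} :=
  [set y | (y \notin S) && ~~ odd #|nbhd_in e S y|].

Lemma odd_independent_adjoin_even_nbhd_outside (T : finType) (e : rel T)
    (S : {set T}) :
  independent e S ->
  odd_independent (adjoin_vertex e (even_nbhd_outside e S)) (apex_extend S).
Proof.
move=> indS; apply/andP; split.
  apply: independent_adjoin_vertex indS _.
  by apply/pred0P => x; rewrite /= inE; case: (x \in S).
apply/forall_inP => -[y|]; rewrite inE /apex_extend in_setU1 ?eqxx //=.
rewrite (mem_imset _ _ Some_inj) => yS.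
by rewrite card_nbhd_in_adjoin_vertex inE yS oddD /= oddb addbN addbb orbT.
Qed.

Theorem proposition17 (T : finType) (eG : rel T) :
  simple_graph eG ->
  exists (U : finType) (eH : rel U) (f : T -> U),
    [/\ simple_graph eH,
        #|U| = #|T| + 1,
        induced_embedding eG eH f,
        alpha_od eH = alpha eH
      & alpha eH = alpha eG + 1].
Proof.
move=> simpleG; have [S indS alphaS] := alpha_attained eG.
set eH := adjoin_vertex eG (even_nbhd_outside eG S).
have oddS' : odd_independent eH (apex_extend S).
  exact: odd_independent_adjoin_even_nbhd_outside.
have alphaH : alpha eH = alpha eG + 1.
  apply/anti_leq; rewrite alpha_adjoin_vertex_le alphaS -card_apex_extend.
  by rewrite independent_le_alpha //; case/andP: oddS'.
exists (option T), eH, Some; split.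
- exact: simple_adjoin_vertex.
- by rewrite card_option addn1.
- exact: induced_adjoin_vertex.
- apply/anti_leq; rewrite alpha_od_le_alpha alphaH alphaS -card_apex_extend.
  exact: odd_independent_le_alpha_od.
- exact: alphaH.
Qed.
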